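(* For all $m,n\ge1$ with $n\ge\frac87\|[\Gamma]_{\underline m}^{-1}\|$ we have $\{8\sqrt m\,\|[\Xi]_{\underline m}\|\le1\}\subset\{[\widehat\Gamma]_{\underline m}\text{ is non-singular and }\|[\widehat\Gamma]_{\underline m}^{-1}\|\le n\}$.
   Context: $\mathbb H$ is a separable Hilbert space with orthonormal basis $\{\psi_j\}$; $[h]_{\underline m}=(\langle h,\psi_j\rangle)_{j\le m}$, $[T]_{\underline m}=(\langle\psi_j,T\psi_k\rangle)_{1\le j,k\le m}$; matrix norms are spectral norms; $[\mathrm I]_{\underline m}$ is the identity. $\Gamma$ is a strictly positive covariance operator of a centered $\mathbb H$-valued random element $X$ (so $[\Gamma]_{\underline m}$ is positive definite), $X_1,\dots,X_n$ are i.i.d. copies, $[\widehat\Gamma]_{\underline m}=n^{-1}\sum_i[X_i]_{\underline m}[X_i]_{\underline m}^t$, and $[\Xi]_{\underline m}:=[\Gamma]_{\underline m}^{-1/2}[\widehat\Gamma]_{\underline m}[\Gamma]_{\underline m}^{-1/2}-[\mathrm I]_{\underline m}$. *)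

From HB Require Import structures.
From mathcomp Require Import all_boot all_order all_algebra.
From mathcomp Require Import boolp classical_sets reals.
Set Implicit Arguments. Unset Strict Implicit. Unset Printing Implicit Defensive.
Import Order.TTheory GRing.Theory Num.Theory.
Local Open Scope ring_scope.
Local Open Scope classical_set_scope.

Section Defs.
Variable R : realType.

Definition vnorm k (v : 'cV[R]_k) : R := Num.sqrt (\sum_i v i 0 ^+ 2).

Definition specnorm p k (A : 'M[R]_(p, k)) : R :=
  sup [set vnorm (A *m v) | v in [set v : 'cV[R]_k | vnorm v <= 1]].

Definition posdef k (A : 'M[R]_k) : Prop :=
  A^T = A /\ forall v : 'cV[R]_k, v != 0 -> 0 < (v^T *m A *m v) 0 0.

Definition is_sqrt_inv k (G S : 'M[R]_k) : Prop :=
  posdef S /\ S *m S = invmx G.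

(* G^{-1/2}: the positive definite square root of the inverse of G
   (chosen via the choice operator of MathComp-Analysis; it exists and is
   unique when G is positive definite). *)
Definition msqrtinv k (G : 'M[R]_k) : 'M[R]_k := xget 0 [set S : 'M[R]_k | is_sqrt_inv G S].

Definition empcov k n (x : 'I_n -> 'cV[R]_k) : 'M[R]_k :=
  n%:R^-1 *: \sum_(i < n) (x i *m (x i)^T).

Definition Xi k (G Ghat : 'M[R]_k) : 'M[R]_k :=
  msqrtinv G *m Ghat *m msqrtinv G - 1%:M.

End Defs.

From HB Require Import structures.
From mathcomp Require Import all_boot all_order all_algebra.
From mathcomp Require Import boolp classical_sets reals.
From mathcomp Require Import ring lra.
Set Implicit Arguments. Unset Strict Implicit. Unset Printing Implicit Defensive.
Import Order.TTheory GRing.Theory Num.Theory.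
Local Open Scope ring_scope.

(* Write S = Gamma^{-1/2}, so that S Ghat S = I + Xi. For v = S w,
   |v|^2 = w^T Gamma^{-1} w <= |Gamma^{-1}| |w|^2, while
   (1 - |Xi|) |w|^2 <= w^T (I + Xi) w = v^T Ghat v <= |v| |Ghat v|.
   With 8 |Xi| <= 1 this gives |v| <= 8/7 |Gamma^{-1}| |Ghat v| <= n |Ghat v|:
   Ghat is bounded below by 1/n, hence invertible with |Ghat^{-1}| <= n. *)

Section EuclideanColumnVectors.
Variable R : realType.
Implicit Types (k : nat).

Definition dot k (a b : 'cV[R]_k) : R := \sum_i a i 0 * b i 0.

Lemma dotC k (a b : 'cV[R]_k) : dot a b = dot b a.
Proof. by apply: eq_bigr => i _; rewrite mulrC. Qed.

Lemma dotE k (a b : 'cV[R]_k) : (a^T *m b) 0 0 = dot a b.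
Proof. by rewrite mxE; apply: eq_bigr => i _; rewrite mxE. Qed.

Lemma dotDr k (a b c : 'cV[R]_k) : dot a (b + c) = dot a b + dot a c.
Proof. by rewrite /dot -big_split; apply: eq_bigr => i _; rewrite mxE mulrDr. Qed.

Lemma dotNl k (a b : 'cV[R]_k) : dot (- a) b = - dot a b.
Proof. by rewrite /dot -sumrN; apply: eq_bigr => i _; rewrite mxE mulNr. Qed.

Lemma dotZl k c (a b : 'cV[R]_k) : dot (c *: a) b = c * dot a b.
Proof. by rewrite /dot mulr_sumr; apply: eq_bigr => i _; rewrite mxE mulrA. Qed.

Lemma dot0r k (a : 'cV[R]_k) : dot a 0 = 0.
Proof. by rewrite /dot big1 // => i _; rewrite mxE mulr0. Qed.

Lemma dotMl k (A : 'M[R]_k) a b : dot (A *m a) b = dot a (A^T *m b).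
Proof. by rewrite -!dotE trmx_mul mulmxA. Qed.

Lemma dotmx_ge0 k (a : 'cV[R]_k) : 0 <= dot a a.
Proof. by apply: sumr_ge0 => i _; rewrite -expr2 sqr_ge0. Qed.

Lemma dotmx_eq0 k (a : 'cV[R]_k) : dot a a = 0 -> a = 0.
Proof.
move=> /eqP; rewrite psumr_eq0 => [/allP a2_eq0|i _]; last by rewrite -expr2 sqr_ge0.
apply/matrixP => i j; rewrite (ord1 j) mxE.
by have := a2_eq0 i (mem_index_enum _); rewrite -expr2 sqrf_eq0 => /eqP.
Qed.

Lemma vnormE k (a : 'cV[R]_k) : vnorm a = Num.sqrt (dot a a).
Proof. by rewrite /vnorm /dot; congr Num.sqrt; apply: eq_bigr => i _; rewrite expr2. Qed.

Lemma vnorm_ge0 k (a : 'cV[R]_k) : 0 <= vnorm a.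
Proof. exact: sqrtr_ge0. Qed.

Lemma vnorm0 k : vnorm (0 : 'cV[R]_k) = 0.
Proof. by rewrite /vnorm big1 ?sqrtr0 // => i _; rewrite mxE expr0n. Qed.

Lemma vnorm_sqr k (a : 'cV[R]_k) : vnorm a ^+ 2 = dot a a.
Proof. by rewrite vnormE sqr_sqrtr // dotmx_ge0. Qed.

Lemma vnorm_eq0 k (a : 'cV[R]_k) : vnorm a = 0 -> a = 0.
Proof. by move=> a0; apply: dotmx_eq0; rewrite -vnorm_sqr a0 expr0n. Qed.

Lemma vnorm_gt0 k (a : 'cV[R]_k) : a != 0 -> 0 < vnorm a.
Proof. by move=> a_neq0; rewrite lt0r vnorm_ge0 andbT; apply: contra_neq a_neq0; apply: vnorm_eq0. Qed.

Lemma vnormZ k c (a : 'cV[R]_k) : vnorm (c *: a) = `|c| * vnorm a.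
Proof.
rewrite !vnormE dotZl dotC dotZl mulrA -expr2 sqrtrM ?sqr_ge0 //.
by rewrite sqrtr_sqr.
Qed.

Lemma vnormN k (a : 'cV[R]_k) : vnorm (- a) = vnorm a.
Proof. by rewrite -scaleN1r vnormZ normrN normr1 mul1r. Qed.

Lemma vnorm_delta k (i : 'I_k) : vnorm (delta_mx i 0 : 'cV[R]_k) = 1.
Proof. by rewrite vnormE -dotE trmx_delta mul_delta_mx mxE !eqxx sqrtr1. Qed.

Lemma CauchySchwarz k (a b : 'cV[R]_k) : dot a b <= vnorm a * vnorm b.
Proof.
set al := vnorm a; set be := vnorm b.
have expand : dot (be *: a - al *: b) (be *: a - al *: b) =
    be ^+ 2 * dot a a - 2 * al * be * dot a b + al ^+ 2 * dot b b.
  rewrite dotDr !(dotC (be *: a - al *: b)) !dotDr !dotNl !dotZl.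
  rewrite !(dotC _ (- (al *: b))) !(dotC _ (be *: a)) !dotNl !dotZl (dotC b a).
  ring.
have := dotmx_ge0 (be *: a - al *: b).
rewrite expand -!vnorm_sqr -/al -/be => sqr_ge0.
have [al0|al_neq0] := eqVneq al 0.
  by rewrite al0 mul0r (vnorm_eq0 al0) dotC dot0r.
have [be0|be_neq0] := eqVneq be 0.
  by rewrite be0 mulr0 (vnorm_eq0 be0) dot0r.
have albe_gt0 : 0 < al * be by rewrite mulr_gt0 // lt0r ?al_neq0 ?be_neq0 ?vnorm_ge0.
have : 2 * (al * be) * dot a b <= 2 * (al * be) * (al * be) by nra.
by rewrite ler_pM2l // mulr_gt0.
Qed.

Lemma CauchySchwarzN k (a b : 'cV[R]_k) : - dot a b <= vnorm a * vnorm b.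
Proof. by rewrite -dotNl -(vnormN a) CauchySchwarz. Qed.

End EuclideanColumnVectors.

Section SpectralNorm.
Variable R : realType.
Implicit Types (p k : nat).

Lemma vnorm_mulmx_bounded p k (A : 'M[R]_(p, k)) :
  exists2 C, 0 <= C & forall v, vnorm (A *m v) <= C * vnorm v.
Proof.
exists (Num.sqrt (\sum_i vnorm (\col_j A i j) ^+ 2)); first exact: sqrtr_ge0.
move=> v; rewrite [leLHS]vnormE.
rewrite -(@ger0_norm _ (vnorm v)) ?vnorm_ge0 // -sqrtr_sqr -sqrtrM; last first.
  by apply: sumr_ge0 => i _; rewrite sqr_ge0.
apply: ler_wsqrtr; rewrite mulr_suml /dot; apply: ler_sum => i _.
have -> : (A *m v) i 0 = dot (\col_j A i j) v.
  by rewrite mxE; apply: eq_bigr => j _; rewrite mxE.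
rewrite -expr2 -exprMn.
have := CauchySchwarz (\col_j A i j) v; have := CauchySchwarzN (\col_j A i j) v.
nra.
Qed.

Lemma has_sup_specnorm p k (A : 'M[R]_(p, k)) :
  has_sup [set vnorm (A *m v) | v in [set v : 'cV[R]_k | vnorm v <= 1]].
Proof.
have [C C_ge0 AC] := vnorm_mulmx_bounded A.
split; first by exists (vnorm (A *m 0)), 0 => //=; rewrite vnorm0.
exists C => _ [v /= v_le1 <-].
by apply: le_trans (AC v) _; rewrite -[leRHS]mulr1 ler_wpM2l.
Qed.

Lemma specnorm_ub p k (A : 'M[R]_(p, k)) v :
  vnorm v <= 1 -> vnorm (A *m v) <= specnorm A.
Proof. by move=> v_le1; apply: (sup_upper_bound (has_sup_specnorm A)); exists v. Qed.

Lemma specnorm_ge0 p k (A : 'M[R]_(p, k)) : 0 <= specnorm A.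
Proof. by have := @specnorm_ub _ _ A 0; rewrite mulmx0 !vnorm0; apply; rewrite ler01. Qed.

Lemma vnorm_mulmx_le p k (A : 'M[R]_(p, k)) v : vnorm (A *m v) <= specnorm A * vnorm v.
Proof.
have [->|v_neq0] := eqVneq v 0; first by rewrite mulmx0 !vnorm0 mulr0.
have v_gt0 := vnorm_gt0 v_neq0.
have := specnorm_ub A (v := (vnorm v)^-1 *: v).
rewrite -scalemxAr !vnormZ ger0_norm ?invr_ge0 ?vnorm_ge0 // mulVf ?gt_eqF // lexx.
by move=> /(_ isT); rewrite ler_pdivrMl // mulrC.
Qed.

Lemma specnorm_le p k (A : 'M[R]_(p, k)) c : 0 <= c ->
  (forall v, vnorm (A *m v) <= c * vnorm v) -> specnorm A <= c.
Proof.
move=> c_ge0 Ac; apply: ge_sup; first by case: (has_sup_specnorm A).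
move=> _ [v /= v_le1 <-]; apply: le_trans (Ac v) _.
by rewrite -[leRHS]mulr1 ler_wpM2l.
Qed.

Lemma specnormN1_ge1 k : (0 < k)%N -> 1 <= specnorm (- 1%:M : 'M[R]_k).
Proof.
move=> k_gt0; have := specnorm_ub (- 1%:M) (v := delta_mx (Ordinal k_gt0) 0).
by rewrite mulNmx mul1mx vnormN vnorm_delta; apply.
Qed.

Lemma dot_mulmx_ge k (A : 'M[R]_k) w :
  (1 - specnorm (A - 1%:M)) * vnorm w ^+ 2 <= dot w (A *m w).
Proof.
have -> : A *m w = (A - 1%:M) *m w + w by rewrite mulmxBl mul1mx subrK.
rewrite dotDr -vnorm_sqr.
have := CauchySchwarzN w ((A - 1%:M) *m w).
have := vnorm_mulmx_le (A - 1%:M) w; have := vnorm_ge0 w; nra.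
Qed.

Lemma unitmx_mulmx_inj k (A : 'M[R]_k) :
  (forall v : 'cV[R]_k, A *m v = 0 -> v = 0) -> A \in unitmx.
Proof.
move=> A_inj; rewrite -unitmx_tr -row_free_unit; apply: (@inj_row_free _ k k) => v vA0.
have /A_inj : A *m v^T = 0 by rewrite -[A]trmxK -trmx_mul vA0 trmx0.
by move=> /(congr1 trmx); rewrite trmxK trmx0.
Qed.

Lemma unitmx_bounded_below k (A : 'M[R]_k) c : 0 <= c ->
  (forall v, vnorm v <= c * vnorm (A *m v)) ->
  A \in unitmx /\ specnorm (invmx A) <= c.
Proof.
move=> c_ge0 A_below.
have A_inj (v : 'cV[R]_k) : A *m v = 0 -> v = 0.
  move=> Av0; apply: vnorm_eq0; apply/le_anti.
  by rewrite vnorm_ge0 andbT; have := A_below v; rewrite Av0 vnorm0 mulr0.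
have A_unit := unitmx_mulmx_inj A_inj.
split=> //; apply: specnorm_le => // z.
by have := A_below (invmx A *m z); rewrite mulKVmx.
Qed.

End SpectralNorm.

Lemma posdef_unitmx (R : realType) k (S : 'M[R]_k) : posdef S -> S \in unitmx.
Proof.
case=> _ S_pos; apply: unitmx_mulmx_inj => v Sv0; apply/eqP; apply/negPn/negP.
by move=> /S_pos; rewrite -mulmxA Sv0 mulmx0 mxE ltxx.
Qed.

Lemma congruence_bounded_below (R : realType) k (S B : 'M[R]_k) v :
  S^T = S -> S \in unitmx ->
  (1 - specnorm (S *m B *m S - 1%:M)) * vnorm v <= specnorm (S *m S) * vnorm (B *m v).
Proof.
move=> S_sym S_unit.
set xi := specnorm _; set t := specnorm _.
set w := invmx S *m v; have Sw : S *m w = v by rewrite /w mulKVmx.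
have v_le : vnorm v ^+ 2 <= t * vnorm w ^+ 2.
  rewrite vnorm_sqr -Sw dotMl S_sym mulmxA.
  apply: le_trans (CauchySchwarz _ _) _.
  rewrite expr2 mulrA [t * _]mulrC -mulrA ler_wpM2l ?vnorm_ge0 //.
  exact: vnorm_mulmx_le.
have w_le : (1 - xi) * vnorm w ^+ 2 <= vnorm v * vnorm (B *m v).
  apply: le_trans (dot_mulmx_ge _ w) _.
  by rewrite -!mulmxA Sw -{1}S_sym -dotMl Sw CauchySchwarz.
have [->|v_neq0] := eqVneq v 0.
  by rewrite vnorm0 mulr0 mulmx0 vnorm0 mulr0.
have v_gt0 := vnorm_gt0 v_neq0.
have t_ge0 : 0 <= t := specnorm_ge0 _.
have Bv_ge0 := vnorm_ge0 (B *m v).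
have [xi_gt1|] := ltP 1 xi.
  by apply: le_trans (mulr_ge0 t_ge0 Bv_ge0); rewrite nmulr_rle0 ?subr_lt0 ?vnorm_ge0.
rewrite -subr_ge0 => xi_le1; rewrite -(ler_pM2r v_gt0).
have := ler_wpM2l (xi_le1 : 0 <= 1 - xi) v_le.
have := ler_wpM2l t_ge0 w_le; nra.
Qed.

Lemma msqrtinvP (R : realType) k (G : 'M[R]_k) :
  (exists S, is_sqrt_inv G S) -> is_sqrt_inv G (msqrtinv G).
Proof. by case=> S; apply: xgetI. Qed.

Lemma msqrtinv_eq0 (R : realType) k (G : 'M[R]_k) :
  ~ (exists S, is_sqrt_inv G S) -> msqrtinv G = 0.
Proof. by move=> no_root; apply: xgetPN => S S_root; apply: no_root; exists S. Qed.

Theorem lemmaB5 (R : realType) (m n : nat) (hm : (1 <= m)%N) (hn : (1 <= n)%N)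
  (G : 'M[R]_m) (hG : posdef G) (x : 'I_n -> 'cV[R]_m) :
  8%:R / 7%:R * specnorm (invmx G) <= n%:R ->
  8%:R * Num.sqrt m%:R * specnorm (Xi G (empcov x)) <= 1 ->
  empcov x \in unitmx /\ specnorm (invmx (empcov x)) <= n%:R.
Proof.
move=> Ginv_le Xi_le; set Gh := empcov x in Xi_le *.
have sqrtm_ge1 : 1 <= Num.sqrt (m%:R : R).
  by rewrite -[leLHS]sqrtr1; apply: ler_wsqrtr; rewrite ler1n.
have xi_ge0 := specnorm_ge0 (Xi G Gh).
have xi_le : 8 * specnorm (Xi G Gh) <= 1 by apply: le_trans Xi_le; nra.
(* A root exists as G is positive definite, but it is simpler to refute the
   junk value msqrtinv G = 0: it makes Xi = -I, contradicting the bound. *)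
have [root|no_root] := pselect (exists S, is_sqrt_inv G S); last first.
  move: xi_le; rewrite /Xi msqrtinv_eq0 // mul0mx mulmx0 sub0r.
  by have := specnormN1_ge1 R hm; lra.
have [S_pd SS] := msqrtinvP root.
apply: unitmx_bounded_below; first exact: ler0n.
move=> v; have Gh_below := congruence_bounded_below Gh v S_pd.1 (posdef_unitmx S_pd).
rewrite SS -/(Xi G Gh) in Gh_below.
have v_ge0 := vnorm_ge0 v.
apply: (@le_trans _ _ (8 / 7 * ((1 - specnorm (Xi G Gh)) * vnorm v))); first nra.
apply: le_trans (ler_wpM2l _ Gh_below) _; first lra.
by rewrite mulrA ler_wpM2r ?vnorm_ge0.
Qed.
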